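(* Let $X=\mathbb{R}^{\mathcal N}$ with the Euclidean inner product $\langle u,v\rangle=u^t v$. Let $\mathcal P\subset\mathbb{R}^p$ and let $\mu$ be a random variable with values in $\mathcal P$. For each $\mu\in\mathcal P$ let $A(\mu)$ be an invertible $\mathcal N\times\mathcal N$ matrix and $f(\mu)\in X$, let $l\in X$, and let $Z$ be an $\mathcal N\times n$ matrix such that $Z^tA(\mu)Z$ is invertible for every $\mu$. Let $u(\mu)$ solve $A(\mu)u(\mu)=f(\mu)$, let $\widetilde u(\mu)$ solve $Z^tA(\mu)Z\,\widetilde u(\mu)=Z^tf(\mu)$, and set $s(\mu)=\langle l,u(\mu)\rangle$, $\widetilde s(\mu)=\langle l,Z\widetilde u(\mu)\rangle$, $r(\mu)=A(\mu)Z\widetilde u(\mu)-f(\mu)$, $w(\mu)=A(\mu)^{-t}l$. Let $\Phi=\{\phi_1,\dots,\phi_{\mathcal N}\}$ be any orthonormal basis of $X$ (with the convention $\phi_i=0$ for $i>\mathcal N$), and let $\{\mathcal P_1,\dots,\mathcal P_K\}$ be a partition of $\mathcal P$; for $\mu\in\mathcal P$ let $k(\mu)$ be the unique $k$ with $\mu\in\mathcal P_k$. Let $N\in\mathbb{N}^*$. For $i=1,\dots,N$ put $D_i(\mu,\Phi)=\langle w(\mu),\phi_i\rangle$, and for $k=1,\dots,K$ put $\beta^{min}_{i,k}(\Phi)=\min_{\mu\in\mathcal P_k}D_i(\mu,\Phi)$ and $\beta^{max}_{i,k}(\Phi)=\max_{\mu\in\mathcal P_k}D_i(\mu,\Phi)$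 (assumed to exist). Define $\beta_i^{up}(\mu,\Phi)=\beta^{max}_{i,k(\mu)}(\Phi)$ if $\langle r(\mu),\phi_i\rangle>0$ and $\beta^{min}_{i,k(\mu)}(\Phi)$ otherwise; and $\beta_i^{low}(\mu,\Phi)=\beta^{min}_{i,k(\mu)}(\Phi)$ if $\langle r(\mu),\phi_i\rangle>0$ and $\beta^{max}_{i,k(\mu)}(\Phi)$ otherwise. Set $T_1^{low}(\mu,N,\Phi)=\sum_{i=1}^N\langle r(\mu),\phi_i\rangle\beta_i^{low}(\mu,\Phi)$, $T_1^{up}(\mu,N,\Phi)=\sum_{i=1}^N\langle r(\mu),\phi_i\rangle\beta_i^{up}(\mu,\Phi)$, $T_1(\mu,N,\Phi)=\max(|T_1^{low}(\mu,N,\Phi)|,|T_1^{up}(\mu,N,\Phi)|)$, and $T_2(N,\Phi)=\mathbf{E}_\mu\left(\left|\sum_{i>N}\langle w(\mu),\phi_i\rangle\langle r(\mu),\phi_i\rangle\right|\right)$ (assumed finite). Then for every $\alpha\in\,]0,1[$ and every $N\in\mathbb{N}^*$, $$P\left(|s(\mu)-\widetilde s(\mu)|>T_1(\mu,N,\Phi)+\frac{T_2(N,\Phi)}{\alpha}\right)\le\alpha.$$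
   Context: All maps of $\mu$ involved are assumed measurable so that the probability and expectation make sense; the probability and expectation are with respect to the distribution of the random parameter $\mu$. $M^t$ denotes the transpose of a matrix $M$ and $A(\mu)^{-t}$ the inverse of the transpose. *)

From mathcomp Require Import all_boot all_order all_algebra.
From mathcomp Require Import all_classical all_reals all_analysis.
Set Implicit Arguments. Unset Strict Implicit. Unset Printing Implicit Defensive.
Import Order.TTheory GRing.Theory Num.Theory.
Local Open Scope ring_scope.
Local Open Scope classical_set_scope.

Section RB.
Variable R : realType.

Definition ip (m : nat) (u v : 'cV[R]_m) : R := (u^T *m v) ord0 ord0.

(* phi_i extended by 0 for indices >= Nn (0-based indexing: paper's phi_{i+1}) *)
Definition phiext (m : nat) (phi : 'I_m -> 'cV[R]_m) (i : nat) : 'cV[R]_m :=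
  oapp phi 0 (insub i).

Variables (Nn n : nat) (Par : Type).
Variables (A : Par -> 'M[R]_Nn) (f : Par -> 'cV[R]_Nn) (l : 'cV[R]_Nn)
          (Z : 'M[R]_(Nn, n)).

Definition usol (mu : Par) : 'cV[R]_Nn := invmx (A mu) *m f mu.
Definition ured (mu : Par) : 'cV[R]_n := invmx (Z^T *m A mu *m Z) *m (Z^T *m f mu).
Definition sout (mu : Par) : R := ip l (usol mu).
Definition sred (mu : Par) : R := ip l (Z *m ured mu).
Definition resid (mu : Par) : 'cV[R]_Nn := A mu *m Z *m ured mu - f mu.
Definition wdual (mu : Par) : 'cV[R]_Nn := invmx ((A mu)^T) *m l.

Variables (phi : 'I_Nn -> 'cV[R]_Nn) (K : nat) (Pk : 'I_K -> set Par)
          (kf : Par -> 'I_K).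

Definition Dcoef (i : nat) (mu : Par) : R := ip (wdual mu) (phiext phi i).
Definition betamin (i : nat) (k : 'I_K) : R := inf [set Dcoef i mu | mu in Pk k].
Definition betamax (i : nat) (k : 'I_K) : R := sup [set Dcoef i mu | mu in Pk k].

Definition beta_up (i : nat) (mu : Par) : R :=
  if 0 < ip (resid mu) (phiext phi i) then betamax i (kf mu) else betamin i (kf mu).
Definition beta_low (i : nat) (mu : Par) : R :=
  if 0 < ip (resid mu) (phiext phi i) then betamin i (kf mu) else betamax i (kf mu).

Definition T1low (mu : Par) (N : nat) : R :=
  \sum_(0 <= i < N) ip (resid mu) (phiext phi i) * beta_low i mu.
Definition T1up (mu : Par) (N : nat) : R :=
  \sum_(0 <= i < N) ip (resid mu) (phiext phi i) * beta_up i mu.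
Definition T1 (mu : Par) (N : nat) : R := Num.max `|T1low mu N| `|T1up mu N|.

(* sum_{i > N} <w,phi_i><r,phi_i> (paper 1-based); finite since phi_i = 0 for i > Nn *)
Definition tailsum (mu : Par) (N : nat) : R :=
  \sum_(N <= i < maxn N Nn) ip (wdual mu) (phiext phi i) * ip (resid mu) (phiext phi i).

End RB.

(** The primal–dual identity [s - s~ = - <w, r>] and Parseval's identity in the
    basis [Phi] split the output error into a head [sum_(i < N) <w,phi_i><r,phi_i>]
    and a tail.  In the head each dual coefficient [<w,phi_i>] lies between
    [beta^min] and [beta^max] on the cell of [mu], so choosing the bound according to
    the sign of [<r,phi_i>] squeezes the head between [T1^low] and [T1^up], whence its
    modulus is at most [T1].  The event [|s - s~| > T1 + T2/alpha] is therefore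
    contained in the event [|tail| > T2/alpha], whose probability is at most [alpha]
    by Markov's inequality, [T2] being the mean of [|tail|]. *)

From mathcomp Require Import all_boot all_order all_algebra.
From mathcomp Require Import all_classical all_reals all_analysis measurable_realfun.
Set Implicit Arguments. Unset Strict Implicit. Unset Printing Implicit Defensive.
Import Order.TTheory GRing.Theory Num.Theory.
Local Open Scope ring_scope.
Local Open Scope classical_set_scope.

Section InnerProduct.
Variables (R : realType) (m : nat).
Implicit Types u v : 'cV[R]_m.

Lemma ipE u v : ip u v = \sum_a u a ord0 * v a ord0.
Proof. by rewrite /ip mxE; apply: eq_bigr => a _; rewrite mxE. Qed.

Lemma ipr0 u : ip u 0 = 0.
Proof. by rewrite ipE big1 // => a _; rewrite mxE mulr0. Qed.

Variable phi : 'I_m -> 'cV[R]_m.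

Lemma ip_parseval u v :
  (forall i j, ip (phi i) (phi j) = (i == j)%:R) ->
  ip u v = \sum_i ip u (phi i) * ip v (phi i).
Proof.
move=> phi_on; pose P : 'M[R]_m := \matrix_(a, j) phi j a ord0.
have PtP : P^T *m P = 1%:M.
  by apply/matrixP => i j; rewrite !mxE -phi_on ipE; apply: eq_bigr => a _; rewrite !mxE.
have -> : ip u v = ip u (P *m P^T *m v) by rewrite (mulmx1C PtP) mul1mx.
rewrite /ip -(mulmxA P) mulmxA [in LHS]mxE; apply: eq_bigr => j _.
congr (_ * _); rewrite !mxE; apply: eq_bigr => a _; rewrite !mxE //.
by rewrite mulrC.
Qed.

Lemma phiext_ord (i : 'I_m) : phiext phi i = phi i.
Proof. by rewrite /phiext valK. Qed.

Lemma phiext_out (i : nat) : (m <= i)%N -> phiext phi i = 0.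
Proof. by move=> h; rewrite /phiext insubN // -leqNgt. Qed.

Lemma sum_phiext_split (F : 'cV[R]_m -> R) (N : nat) : F 0 = 0 ->
  \sum_(i < m) F (phi i) =
  \sum_(0 <= i < N) F (phiext phi i) + \sum_(N <= i < maxn N m) F (phiext phi i).
Proof.
move=> F0; rewrite -big_cat_nat ?leq_maxl // (big_cat_nat _ (n := m)) ?leq_maxr //=.
rewrite [X in _ = _ + X]big_nat_cond [X in _ = _ + X]big1 ?addr0; last first.
  by move=> i /andP[/andP[mi _] _]; rewrite phiext_out.
by rewrite big_mkord; apply: eq_bigr => i _; rewrite phiext_ord.
Qed.

End InnerProduct.

Lemma sout_sub_sred (R : realType) Nn n Par (A : Par -> 'M[R]_Nn) f l
    (Z : 'M[R]_(Nn, n)) m :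
  A m \in unitmx -> sout A f l m - sred A f l Z m = - ip (wdual A l m) (resid A f Z m).
Proof.
move=> uA; rewrite /sout /sred /wdual /resid /ip /usol.
by rewrite trmx_mul -trmx_inv trmxK mulmxBr -!mulmxA mulKmx // !mxE opprB.
Qed.

Lemma mulr_between_by_sign (R : realDomainType) (c lo x hi : R) :
  lo <= x -> x <= hi ->
  c * (if 0 < c then lo else hi) <= c * x <= c * (if 0 < c then hi else lo).
Proof.
move=> lox xhi; case: ifP => [/ltW c0|/negbT]; first by rewrite !ler_wpM2l.
by rewrite -leNgt => c0; rewrite !ler_wnM2l.
Qed.

Lemma norm_le_max_between (R : realDomainType) (lo x hi : R) :
  lo <= x -> x <= hi -> `|x| <= Num.max `|lo| `|hi|.
Proof.
move=> lox xhi; rewrite le_max; have [x0|x0] := leP 0 x.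
  by rewrite ger0_norm // (le_trans xhi (ler_norm _)) orbT.
by rewrite ltr0_norm // ler_normr lerN2 lox orbT.
Qed.

Section DeterministicBound.
Variables (R : realType) (Nn n : nat) (Par : Type).
Variables (A : Par -> 'M[R]_Nn) (f : Par -> 'cV[R]_Nn) (l : 'cV[R]_Nn)
          (Z : 'M[R]_(Nn, n)).
Variables (phi : 'I_Nn -> 'cV[R]_Nn) (K : nat) (Pk : 'I_K -> set Par)
          (kf : Par -> 'I_K) (N : nat).

Local Notation D := (Dcoef A l phi).

Hypothesis min_attained : forall (i : nat) (k : 'I_K), (i < N)%N ->
  exists2 m0, Pk k m0 & forall m, Pk k m -> D i m0 <= D i m.
Hypothesis max_attained : forall (i : nat) (k : 'I_K), (i < N)%N ->
  exists2 m0, Pk k m0 & forall m, Pk k m -> D i m <= D i m0.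

Lemma betamin_le_Dcoef i k m : (i < N)%N -> Pk k m -> betamin A l phi Pk i k <= D i m.
Proof.
move=> iN Pkm; apply: ge_inf; last by exists m.
by have [m0 _ Hm0] := min_attained k iN; exists (D i m0) => _ [x Px <-]; exact: Hm0.
Qed.

Lemma Dcoef_le_betamax i k m : (i < N)%N -> Pk k m -> D i m <= betamax A l phi Pk i k.
Proof.
move=> iN Pkm; apply: ub_le_sup; last by exists m.
by have [m0 _ Hm0] := max_attained k iN; exists (D i m0) => _ [x Px <-]; exact: Hm0.
Qed.

Lemma T1_bounds_head m : Pk (kf m) m ->
  let head := \sum_(0 <= i < N) D i m * ip (resid A f Z m) (phiext phi i) in
  T1low A f l Z phi Pk kf m N <= head <= T1up A f l Z phi Pk kf m N.
Proof.
move=> Pm /=.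
have termwise i : (0 <= i < N)%N ->
    ip (resid A f Z m) (phiext phi i) * beta_low A f l Z phi Pk kf i m
    <= D i m * ip (resid A f Z m) (phiext phi i)
    <= ip (resid A f Z m) (phiext phi i) * beta_up A f l Z phi Pk kf i m.
  move=> /andP[_ iN]; rewrite [D i m * _]mulrC /beta_low /beta_up.
  exact: mulr_between_by_sign (betamin_le_Dcoef iN Pm) (Dcoef_le_betamax iN Pm).
by apply/andP; split; apply: ler_sum_nat => i /termwise /andP[].
Qed.

Lemma output_error_le_T1_tail m : A m \in unitmx ->
  (forall i j, ip (phi i) (phi j) = (i == j)%:R) -> Pk (kf m) m ->
  `|sout A f l m - sred A f l Z m|
    <= T1 A f l Z phi Pk kf m N + `|tailsum A f l Z phi m N|.
Proof.
move=> uA phi_on Pm.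
rewrite sout_sub_sred // normrN (ip_parseval _ _ phi_on).
rewrite (@sum_phiext_split _ _ _ (fun v => ip (wdual A l m) v * ip (resid A f Z m) v) N);
  last by rewrite ipr0 mul0r.
apply: (le_trans (ler_normD _ _)); rewrite lerD2r.
by have /andP[lo hi] := T1_bounds_head Pm; exact: norm_le_max_between lo hi.
Qed.

End DeterministicBound.

Lemma measurable_ltr_set d (T : measurableType d) (R : realType) (g h : T -> R) :
  measurable_fun setT g -> measurable_fun setT h -> measurable [set x | g x < h x].
Proof.
move=> mg mh; rewrite -[X in measurable X]setTI.
under eq_set do rewrite -lte_fin.
by apply: measurable_lte => //; exact/measurable_EFinP.
Qed.

Lemma measurable_ler_set d (T : measurableType d) (R : realType) (g h : T -> R) :
  measurable_fun setT g -> measurable_fun setT h -> measurable [set x | g x <= h x].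
Proof.
move=> mg mh; rewrite -[X in measurable X]setTI.
under eq_set do rewrite -lee_fin.
by apply: measurable_lee => //; exact/measurable_EFinP.
Qed.

Section Markov.
Context d (T : measurableType d) (R : realType) (P : probability T R).
Variable X : T -> R.
Hypotheses (X_ge0 : forall w, 0 <= X w)
           (X_int : P.-integrable setT (fun w => (X w)%:E)).

Local Notation mean := (fine (\int[P]_w (X w)%:E)).

Let mXE : measurable_fun setT (fun w => (X w)%:E).
Proof. exact: measurable_int X_int. Qed.
Let mX : measurable_fun setT X. Proof. exact/measurable_EFinP. Qed.

Let integral_absE : (\int[P]_w `|(X w)%:E| = mean%:E)%E.
Proof.
rewrite fineK; last exact: integrable_fin_num.
by apply: eq_integral => w _; rewrite gee0_abs // lee_fin.
Qed.

Lemma prob_gt0_mean0 : mean = 0 -> P [set w | 0 < X w] = 0%E.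
Proof.
move=> mean0; have /ae_eq_integral_abs : (\int[P]_w `|(X w)%:E| = 0)%E.
  by rewrite integral_absE mean0.
move=> /(_ measurableT mXE) [M [mM PM0 XM]]; apply/eqP; rewrite -measure_le0 -PM0.
apply: le_measure; rewrite ?inE //; first exact: measurable_ltr_set.
by move=> w /= Xw; apply: XM => /(_ I) [] /eqP; rewrite gt_eqF.
Qed.

Lemma prob_ge_le_mean c : 0 < c -> (c%:E * P [set w | (c <= X w)%R] <= mean%:E)%E.
Proof.
move=> c0; rewrite -integral_absE.
apply: le_trans (le_integral_abse P measurableT mXE c0); rewrite setTI.
suff -> : [set w | (c <= X w)%R] = [set w | c%:E <= `|(X w)%:E|]%E by [].
by apply/seteqP; split => w /=; rewrite lee_fin ger0_norm.
Qed.

Lemma prob_gt_mean_div_le alpha : 0 < alpha ->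
  (P [set w | (mean / alpha < X w)%R] <= alpha%:E)%E.
Proof.
move=> alpha0; have mean_ge0 : 0 <= mean.
  by rewrite fine_ge0 // integral_ge0 // => w _; rewrite lee_fin.
(* The event is strict, so a vanishing mean needs [X = 0] a.e. rather than Markov. *)
have [mean0|mean_gt0] := eqVneq mean 0.
  by rewrite mean0 mul0r prob_gt0_mean0 // lee_fin ltW.
have c0 : 0 < mean / alpha by rewrite divr_gt0 // lt_neqAle eq_sym mean_gt0.
rewrite -(@lee_pmul2l _ (mean / alpha)%:E) ?lte_fin //.
rewrite -EFinM divfK ?gt_eqF //; apply: le_trans (prob_ge_le_mean c0).
apply: lee_wpmul2l; first by rewrite lee_fin ltW.
apply: le_measure; rewrite ?inE.
- exact: measurable_ltr_set.
- exact: measurable_ler_set.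
- by move=> w /= /ltW.
Qed.

End Markov.

Theorem theorem1 (R : realType) (d : measure_display) (T : measurableType d)
  (Prob : probability T R)
  (Nn n p : nat) (Pset : set 'cV[R]_p) (mu : T -> 'cV[R]_p)
  (A : 'cV[R]_p -> 'M[R]_Nn) (f : 'cV[R]_p -> 'cV[R]_Nn) (l : 'cV[R]_Nn)
  (Z : 'M[R]_(Nn, n))
  (phi : 'I_Nn -> 'cV[R]_Nn) (K : nat) (Pk : 'I_K -> set 'cV[R]_p)
  (kf : 'cV[R]_p -> 'I_K) (N : nat) (alpha : R) :
  (forall w, Pset (mu w)) ->
  (forall m, Pset m -> A m \in unitmx) ->
  (forall m, Pset m -> Z^T *m A m *m Z \in unitmx) ->
  (forall i j : 'I_Nn, ip (phi i) (phi j) = (i == j)%:R) ->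
  (forall k, Pk k `<=` Pset) ->
  (forall k k', k != k' -> Pk k `&` Pk k' = set0) ->
  (forall m, Pset m -> Pk (kf m) m) ->
  (forall (i : nat) (k : 'I_K), (i < N)%N ->
     exists2 m0, Pk k m0 & forall m, Pk k m -> Dcoef A l phi i m0 <= Dcoef A l phi i m) ->
  (forall (i : nat) (k : 'I_K), (i < N)%N ->
     exists2 m0, Pk k m0 & forall m, Pk k m -> Dcoef A l phi i m <= Dcoef A l phi i m0) ->
  measurable_fun setT (fun w => `|sout A f l (mu w) - sred A f l Z (mu w)|) ->
  measurable_fun setT (fun w => T1 A f l Z phi Pk kf (mu w) N) ->
  Prob.-integrable setT (fun w => (`|tailsum A f l Z phi (mu w) N|)%:E) ->
  0 < alpha < 1 -> (0 < N)%N ->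
  (Prob [set w | (`|sout A f l (mu w) - sred A f l Z (mu w)| >
                T1 A f l Z phi Pk kf (mu w) N +
                fine (\int[Prob]_w (`|tailsum A f l Z phi (mu w) N|)%:E) / alpha)%R]
    <= alpha%:E)%E.
Proof.
move=> Pmu uA _ phi_on _ _ Pkf min_att max_att m_err m_T1 tail_int /andP[alpha0 _] _.
apply: le_trans (prob_gt_mean_div_le _ tail_int alpha0); last by move=> w.
have m_tail : measurable_fun setT (fun w => `|tailsum A f l Z phi (mu w) N|).
  exact/measurable_EFinP/(measurable_int _ tail_int).
apply: le_measure; rewrite ?inE.
- by apply: measurable_ltr_set => //; apply: measurable_funD.
- exact: measurable_ltr_set.
move=> w /= err_gt; rewrite -(ltrD2l (T1 A f l Z phi Pk kf (mu w) N)).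
by apply: lt_le_trans err_gt _; apply: output_error_le_T1_tail; auto.
Qed.
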